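(* Let $C$ be a free $E$-linear code of length $2n$ and rank $k$ whose symplectic hull-rank is $l$. Let $G$ be a $k\times 2n$ binary generator matrix of $C_{Res}$ with rows $r_i=(c_{i,1},\dots,c_{i,n}\,|\,d_{i,1},\dots,d_{i,n})$, $1\le i\le k$, and let $x=(a|b)=(a_1,\dots,a_n\,|\,b_1,\dots,b_n)\in\mathbb{F}_2^{2n}$ satisfy $\langle x,r_i\rangle_s=0$ for all $1\le i\le k$. (a) The $(k+1)\times(2n+2)$ matrix $G'$ over $E$ whose first row is $(\kappa,\kappa a_1,\dots,\kappa a_n,\kappa,\kappa b_1,\dots,\kappa b_n)$ and whose $(i+1)$-th row, $1\le i\le k$, is $(0,\kappa c_{i,1},\dots,\kappa c_{i,n},0,\kappa d_{i,1},\dots,\kappa d_{i,n})$ generates a free $E$-linear code $D$ of length $2n+2$ and rank $k+1$ with symplectic hull-rank $l+1$. (b) Let $m=2n-k$ and let $H$ be an $m\times 2n$ binary parity-check matrix of $C_{Res}$ (i.e. a generator matrix of $(C_{Res})^{\perp_S}$) with rows $s_j=(s_{j,1},\dots,s_{j,n}\,|\,t_{j,1},\dots,t_{j,n})$. Let $y=(u|v)=(u_1,\dots,u_n\,|\,v_1,\dots,v_n)\in (C_{Res})^{\perp_S}$, $\delta=\langle x,y\rangle_s\in\mathbb{F}_2$, and $z_j=\langle x,s_j\rangle_s\in\mathbb{F}_2$ for $1\le j\le m$. Then the $(m+1)\times(2n+2)$ matrix $H'$ over $E$ whose first row is $(\kappa,\kappa u_1,\dots,\kappa u_n,\kappa(1+\delta),\kappa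 v_1,\dots,\kappa v_n)$ and whose $(j+1)$-th row, $1\le j\le m$, is $(0,\kappa s_{j,1},\dots,\kappa s_{j,n},\kappa z_j,\kappa t_{j,1},\dots,\kappa t_{j,n})$ is a parity-check matrix of $D$, i.e. a generator matrix of $D^{\perp_S}$.
   Context: $E=\langle \kappa,\tau \mid 2\kappa=2\tau=0,\ \kappa^2=\kappa,\ \tau^2=\tau,\ \kappa\tau=\kappa,\ \tau\kappa=\tau\rangle$ is the non-unital ring $\{0,\kappa,\tau,\zeta\}$, $\zeta=\kappa+\tau$, with $e\kappa=e\tau=e$, $e\zeta=0$ for all $e\in E$. Every $e\in E$ is uniquely $u\kappa+v\zeta$ ($u,v\in\mathbb{F}_2$); $\pi(u\kappa+v\zeta)=u$, componentwise. For $c\in\mathbb{F}_2$, $\kappa c$ means $\kappa$ if $c=1$ and $0$ if $c=0$. An $E$-linear code of length $N$ is a left $E$-submodule $C\subseteq E^{N}$; $C_{Res}=\pi(C)$, $C_{Tor}=\{v\in\mathbb{F}_2^{N}:\zeta v\in C\}$ (componentwise); $C$ is free if $C_{Res}=C_{Tor}$. For $X=\{x_1,\dots,x_k\}\subseteq E^{N}$, $\langle X\rangle_E=\{\sum e_jx_j:e_j\in E\}$, $\langle X\rangle_{\mathbb{F}_2}=\{\sum u_jx_j:u_j\in\mathbb{F}_2\}$; $X$ generates $C$ if $C=\langle X\rangle_E\cup\langle X\rangle_{\mathbb{F}_2}$; a matrix whose rows form a generating set is a generator matrix. The rank of a free code is the cardinality of a minimal generating set. Symplectic inner product on $E^{2n}$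 or $\mathbb{F}_2^{2n}$: for $x=(u|v),y=(u'|v')$ with halves of length $n$, $\langle x,y\rangle_s=\sum_i u_iv'_i+\sum_iv_iu'_i$. For binary $B$, $B^{\perp_S}=\{z:\langle z,w\rangle_s=0\ \forall w\in B\}$. For $E$-linear $C$: $C^{\perp_S}=\{z\in E^{2n}:\langle z,w\rangle_s=\langle w,z\rangle_s=0\ \forall w\in C\}$ and $SHull(C)=C\cap C^{\perp_S}$; for free $C$, $SHull(C)$ is free and the symplectic hull-rank of $C$ is $\mathrm{rank}(SHull(C))$. A parity-check matrix of $C$ is a generator matrix of $C^{\perp_S}$. *)

From HB Require Import structures.
From mathcomp Require Import all_boot all_order all_algebra.
Set Implicit Arguments. Unset Strict Implicit. Unset Printing Implicit Defensive.
Import GRing.Theory.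
Local Open Scope ring_scope.

(* The ring E = {0, kappa, tau, zeta}: an element u*kappa + v*zeta (u,v in F_2)
   is represented by the pair (u, v).  Thus kappa = (1,0), zeta = (0,1),
   tau = kappa + zeta = (1,1). *)
Notation E := ('F_2 * 'F_2)%type.

Definition zeroE : E := (0, 0).
Definition kappa : E := (1, 0).
Definition zeta  : E := (0, 1).
Definition tau   : E := (1, 1).

Definition addE (e f : E) : E := (e.1 + f.1, e.2 + f.2).
Definition mulE (e f : E) : E := if f.1 == 0 then zeroE else e.
Definition piE (e : E) : 'F_2 := e.1.
Definition kc (c : 'F_2) : E := if c == 0 then zeroE else kappa.
Definition zc (c : 'F_2) : E := if c == 0 then zeroE else zeta.

Definition vecE (N : nat) := {ffun 'I_N -> E}.
Definition vzeroE N : vecE N := [ffun _ => zeroE].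
Definition vaddE N (x y : vecE N) : vecE N := [ffun i => addE (x i) (y i)].
Definition vscaleE N (e : E) (x : vecE N) : vecE N := [ffun i => mulE e (x i)].

Definition E_linear N (C : {set vecE N}) : Prop :=
  [/\ vzeroE N \in C,
      (forall x y, x \in C -> y \in C -> vaddE x y \in C) &
      (forall e x, x \in C -> vscaleE e x \in C)].

Definition Res N (C : {set vecE N}) : {set 'rV['F_2]_N} :=
  [set \row_i piE (x i) | x : vecE N in C].
Definition Tor N (C : {set vecE N}) : {set 'rV['F_2]_N} :=
  [set v : 'rV['F_2]_N | [ffun i => zc (v 0 i)] \in C].
Definition free_code N (C : {set vecE N}) : Prop := Res C = Tor C.

Definition Espan N k (X : 'I_k -> vecE N) : {set vecE N} :=
  [set x | [exists e : {ffun 'I_k -> E},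
      x == \big[@vaddE N/vzeroE N]_(j < k) vscaleE (e j) (X j)]].
Definition Fspan N k (X : 'I_k -> vecE N) : {set vecE N} :=
  [set x | [exists u : {ffun 'I_k -> 'F_2},
      x == \big[@vaddE N/vzeroE N]_(j < k) (if u j == 0 then vzeroE N else X j)]].
(* X generates C ; a matrix whose rows form X is a generator matrix of C *)
Definition generates N k (X : 'I_k -> vecE N) (C : {set vecE N}) : Prop :=
  C = Espan X :|: Fspan X.
(* rank = cardinality of a minimal (= minimum-size) generating set *)
Definition has_rank N (C : {set vecE N}) (r : nat) : Prop :=
  (exists X : 'I_r -> vecE N, generates X C) /\
  (forall r' (X : 'I_r' -> vecE N), generates X C -> (r <= r')%N).

Definition symplB n (x y : 'rV['F_2]_(n + n)) : 'F_2 :=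
  \sum_(i < n) (x 0 (lshift n i) * y 0 (rshift n i)
              + x 0 (rshift n i) * y 0 (lshift n i)).
Definition perpB n (B : {set 'rV['F_2]_(n + n)}) : {set 'rV['F_2]_(n + n)} :=
  [set z | [forall w in B, symplB z w == 0]].
Definition symplE n (x y : vecE (n + n)) : E :=
  \big[addE/zeroE]_(i < n) addE (mulE (x (lshift n i)) (y (rshift n i)))
                                (mulE (x (rshift n i)) (y (lshift n i))).
Definition perpE n (C : {set vecE (n + n)}) : {set vecE (n + n)} :=
  [set z | [forall w in C, (symplE z w == zeroE) && (symplE w z == zeroE)]].
Definition SHull n (C : {set vecE (n + n)}) : {set vecE (n + n)} :=
  C :&: perpE C.

(* the vector (h1, a_1..a_n | h2, b_1..b_n) of length (n+1)+(n+1) *)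
Definition extE n (h1 : E) (a : 'I_n -> E) (h2 : E) (b : 'I_n -> E)
  : vecE (n.+1 + n.+1) :=
  [ffun p => match split p with
             | inl j => match unlift ord0 j with None => h1 | Some i => a i end
             | inr j => match unlift ord0 j with None => h2 | Some i => b i end
             end].

Definition Gext n k (G : 'M['F_2]_(k, n + n)) (x : 'rV['F_2]_(n + n))
  : 'I_k.+1 -> vecE (n.+1 + n.+1) :=
  fun r => match unlift ord0 r with
  | None => extE kappa (fun i => kc (x 0 (lshift n i)))
                 kappa (fun i => kc (x 0 (rshift n i)))
  | Some i => extE zeroE (fun j => kc (G i (lshift n j)))
                   zeroE (fun j => kc (G i (rshift n j)))
  end.

Definition Hext n m (H : 'M['F_2]_(m, n + n)) (x y : 'rV['F_2]_(n + n))
  : 'I_m.+1 -> vecE (n.+1 + n.+1) :=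
  fun r => match unlift ord0 r with
  | None => extE kappa (fun i => kc (y 0 (lshift n i)))
                 (kc (1 + symplB x y)) (fun i => kc (y 0 (rshift n i)))
  | Some j => extE zeroE (fun i => kc (H j (lshift n i)))
                   (kc (symplB x (row j H))) (fun i => kc (H j (rshift n i)))
  end.

(* An E-vector is a pair of binary vectors, z = kappa u + zeta v, and a free
   E-linear code with residue code <M> is exactly the set of pairs with both
   halves in <M>.  Its rank is the binary rank of M, its symplectic dual is the
   free code on <M>^perp and its hull the free code on <M> :&: <M>^perp, so the
   theorem is a statement about the binary code W = pi(G') spanned by
   a = (1, x_1..x_n | 1, x_(n+1)..x_2n) and the rows of G padded by zeros.
   Because x is orthogonal to G and the two new coordinates contribute
   c c' + c c' = 0, the form on W only sees the G-components: the hull of W is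
   <a> + hull(G), of rank l + 1.  Likewise (h1, u | h2, .) is orthogonal to W iff
   u is orthogonal to G and h1 + h2 = <x, u>_s, which holds for every row of H';
   as H' has rank 1 + (2n - k) = (2n + 2) - (k + 1), it spans the dual of W. *)

From mathcomp Require Import all_boot all_order all_algebra.
From mathcomp Require Import perm zify ring.
Set Implicit Arguments. Unset Strict Implicit. Unset Printing Implicit Defensive.
Import GRing.Theory.
Local Open Scope ring_scope.

Lemma F2_cases (c : 'F_2) : c = 0 \/ c = 1.
Proof. by case: c => [[|[|//]] Hc]; [left|right]; apply/val_inj. Qed.

Lemma F2_addxx (c : 'F_2) : c + c = 0.
Proof. exact: (addrr_pchar2 (pchar_Fp (isT : prime 2))). Qed.

Lemma F2_oppr (c : 'F_2) : - c = c.
Proof. exact: (oppr_pchar2 (pchar_Fp (isT : prime 2))). Qed.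

Lemma mulE_coord (e f : E) : mulE e f = (e.1 * f.1, e.2 * f.1).
Proof.
rewrite /mulE; case: (F2_cases f.1) => ->; rewrite ?eqxx ?mulr0 ?mulr1 //.
by case: e.
Qed.

Lemma kcE c : kc c = (c, 0).
Proof. by rewrite /kc; case: (F2_cases c) => ->. Qed.

Lemma zcE c : zc c = (0, c).
Proof. by rewrite /zc; case: (F2_cases c) => ->. Qed.

Section Coordinates.
Variable N : nat.
Implicit Types (z : vecE N) (w : 'rV['F_2]_N).

Definition piv z : 'rV['F_2]_N := \row_i (z i).1.
Definition zetav z : 'rV['F_2]_N := \row_i (z i).2.
Definition kappa_vec w : vecE N := [ffun i => (w 0 i, 0)].
Definition zeta_vec w : vecE N := [ffun i => (0, w 0 i)].

Lemma vecE_coord_inj z z' : piv z = piv z' -> zetav z = zetav z' -> z = z'.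
Proof.
move=> /rowP e1 /rowP e2; apply/ffunP => i.
by move: (e1 i) (e2 i); rewrite !mxE; case: (z i) (z' i) => a b [a' b'] /= -> ->.
Qed.

Lemma piv_add z z' : piv (vaddE z z') = piv z + piv z'.
Proof. by apply/rowP => i; rewrite !mxE ffunE. Qed.

Lemma zetav_add z z' : zetav (vaddE z z') = zetav z + zetav z'.
Proof. by apply/rowP => i; rewrite !mxE ffunE. Qed.

Lemma piv0 : piv (vzeroE N) = 0.
Proof. by apply/rowP => i; rewrite !mxE ffunE. Qed.

Lemma zetav0 : zetav (vzeroE N) = 0.
Proof. by apply/rowP => i; rewrite !mxE ffunE. Qed.

Lemma piv_scale e z : piv (vscaleE e z) = e.1 *: piv z.
Proof. by apply/rowP => i; rewrite !mxE ffunE mulE_coord mulrC. Qed.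

Lemma zetav_scale e z : zetav (vscaleE e z) = e.2 *: piv z.
Proof. by apply/rowP => i; rewrite !mxE ffunE mulE_coord mulrC. Qed.

Lemma piv_sum r (F : 'I_r -> vecE N) :
  piv (\big[@vaddE N/vzeroE N]_(j < r) F j) = \sum_(j < r) piv (F j).
Proof. exact: (big_morph piv piv_add piv0). Qed.

Lemma zetav_sum r (F : 'I_r -> vecE N) :
  zetav (\big[@vaddE N/vzeroE N]_(j < r) F j) = \sum_(j < r) zetav (F j).
Proof. exact: (big_morph zetav zetav_add zetav0). Qed.

Lemma piv_kappa w : piv (kappa_vec w) = w.
Proof. by apply/rowP => i; rewrite !mxE ffunE. Qed.

Lemma zetav_kappa w : zetav (kappa_vec w) = 0.
Proof. by apply/rowP => i; rewrite !mxE ffunE. Qed.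

Lemma piv_zeta w : piv (zeta_vec w) = 0.
Proof. by apply/rowP => i; rewrite !mxE ffunE. Qed.

Lemma zetav_zeta w : zetav (zeta_vec w) = w.
Proof. by apply/rowP => i; rewrite !mxE ffunE. Qed.

Lemma zc_row w : [ffun i => zc (w 0 i)] = zeta_vec w.
Proof. by apply/ffunP => i; rewrite !ffunE zcE. Qed.

Definition res_mx r (X : 'I_r -> vecE N) : 'M['F_2]_(r, N) := \matrix_(j, i) (X j i).1.

Lemma row_res_mx r (X : 'I_r -> vecE N) j : row j (res_mx X) = piv (X j).
Proof. by apply/rowP => i; rewrite !mxE. Qed.

Lemma piv_span r (X : 'I_r -> vecE N) z :
  z \in Espan X :|: Fspan X -> (piv z <= res_mx X)%MS.
Proof.
rewrite !inE => /orP[/existsP[e /eqP ->] | /existsP[u /eqP ->]];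
  rewrite piv_sum; apply: summx_sub => j _.
  by rewrite piv_scale -row_res_mx scalemx_sub ?row_sub.
by case: eqP; rewrite ?piv0 ?sub0mx // -row_res_mx row_sub.
Qed.

Definition free_of r (M : 'M['F_2]_(r, N)) : {set vecE N} :=
  [set z | (piv z <= M)%MS && (zetav z <= M)%MS].

Section FreeOf.
Variables (r : nat) (M : 'M['F_2]_(r, N)).

Lemma free_of_eqmx r' (M' : 'M['F_2]_(r', N)) : (M :=: M')%MS -> free_of M = free_of M'.
Proof. by move=> eqM; apply/setP => z; rewrite !inE !eqM. Qed.

Lemma kappa_vec_free_of w : (w <= M)%MS -> kappa_vec w \in free_of M.
Proof. by move=> sw; rewrite inE piv_kappa zetav_kappa sw sub0mx. Qed.

Lemma E_linear_free_of : E_linear (free_of M).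
Proof.
split=> [|z z'|e z]; rewrite !inE ?piv0 ?zetav0 ?sub0mx //.
  by rewrite piv_add zetav_add => /andP[? ?] /andP[? ?]; rewrite !addmx_sub.
by rewrite piv_scale zetav_scale => /andP[? ?]; rewrite !scalemx_sub.
Qed.

Lemma Res_free_of : Res (free_of M) = [set w | (w <= M)%MS].
Proof.
apply/setP => w; rewrite inE; apply/imsetP/idP => [[z] | sw].
  by rewrite inE => /andP[sz _] ->.
by exists (kappa_vec w); rewrite ?kappa_vec_free_of // -[LHS]piv_kappa.
Qed.

Lemma Tor_free_of : Tor (free_of M) = [set w | (w <= M)%MS].
Proof.
by apply/setP => w; rewrite !inE zc_row piv_zeta zetav_zeta sub0mx.
Qed.

Lemma free_code_free_of : free_code (free_of M).
Proof. by rewrite /free_code Res_free_of Tor_free_of. Qed.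

Lemma span_kappa_rows (X : 'I_r -> vecE N) :
  (forall j, X j = kappa_vec (row j M)) -> Espan X :|: Fspan X = free_of M.
Proof.
move=> XM; have resX : res_mx X = M.
  by apply/row_matrixP => j; rewrite row_res_mx XM piv_kappa.
apply/setP => z; apply/idP/idP => [zX | ].
  rewrite inE -{1}resX piv_span //=.
  move: zX; rewrite !inE => /orP[/existsP[e /eqP ->] | /existsP[u /eqP ->]];
    rewrite zetav_sum; apply: summx_sub => j _.
    by rewrite zetav_scale XM piv_kappa scalemx_sub ?row_sub.
  by case: eqP; rewrite ?zetav0 ?XM ?zetav_kappa sub0mx.
rewrite inE => /andP[/submxP[a za] /submxP[b zb]].
rewrite !inE; apply/orP; left; apply/existsP; exists [ffun j => (a 0 j, b 0 j)].
apply/eqP/vecE_coord_inj; [rewrite piv_sum za | rewrite zetav_sum zb];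
  rewrite mulmx_sum_row; apply: eq_bigr => j _;
  by rewrite ?piv_scale ?zetav_scale ffunE XM piv_kappa.
Qed.
End FreeOf.

Lemma has_rank_free_of r (M : 'M['F_2]_(r, N)) : has_rank (free_of M) (\rank M).
Proof.
split.
  exists (fun j => kappa_vec (row j (row_base M))).
  rewrite /generates (span_kappa_rows (M := row_base M)) //.
  exact/free_of_eqmx/eqmx_sym/eq_row_base.
move=> r' X genX; rewrite (leq_trans _ (rank_leq_row (res_mx X))) // mxrankS //.
apply/row_subP => i; rewrite -(piv_kappa (row i M)) piv_span // -genX.
by rewrite kappa_vec_free_of ?row_sub.
Qed.

Lemma has_rank_uniq (C : {set vecE N}) a b : has_rank C a -> has_rank C b -> a = b.
Proof.
move=> [[Xa genXa] min_a] [[Xb genXb] min_b].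
by apply/eqP; rewrite eqn_leq (min_a _ Xb genXb) (min_b _ Xa genXa).
Qed.

Lemma free_linear_codeE r (C : {set vecE N}) (G : 'M['F_2]_(r, N)) :
  E_linear C -> free_code C -> (forall w, w \in Res C <-> (w <= G)%MS) ->
  C = free_of G.
Proof.
move=> [_ addC scaleC] freeC ResC.
have zetaC w : (w <= G)%MS -> zeta_vec w \in C.
  by move=> /ResC; rewrite freeC inE zc_row.
have zeta_zetav z : zeta_vec (zetav z) = vaddE z (vscaleE kappa z).
  apply: vecE_coord_inj.
    by rewrite piv_add piv_scale piv_zeta scale1r; apply/rowP => i; rewrite !mxE F2_addxx.
  by rewrite zetav_add zetav_scale zetav_zeta scale0r addr0.
apply/setP => z; rewrite inE; apply/idP/andP => [zC | [/ResC/imsetP[z' z'C pz] /zetaC zzC]].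
  have /ResC pz : piv z \in Res C by apply/imsetP; exists z.
  by split=> //; apply/ResC; rewrite freeC inE zc_row zeta_zetav addC ?scaleC.
have -> : z = vaddE (vscaleE kappa z') (zeta_vec (zetav z)).
  apply: vecE_coord_inj;
    rewrite ?piv_add ?zetav_add ?piv_scale ?zetav_scale ?piv_zeta ?zetav_zeta.
    by rewrite scale1r addr0; exact: pz.
  by rewrite scale0r add0r.
by rewrite addC ?scaleC.
Qed.

End Coordinates.

Lemma split_lshift m n (i : 'I_m) : split (lshift n i) = inl i.
Proof. exact: (unsplitK (inl i : 'I_m + 'I_n)). Qed.

Lemma split_rshift m n (i : 'I_n) : split (rshift m i) = inr i.
Proof. exact: (unsplitK (inr i : 'I_m + 'I_n)). Qed.

Section Symplectic.
Variable n : nat.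
Local Notation N := (n + n)%N.
Implicit Types (u v : 'rV['F_2]_N).

Definition swap_half (p : 'I_N) : 'I_N :=
  match split p with inl i => rshift n i | inr i => lshift n i end.

Lemma swap_halfK : involutive swap_half.
Proof.
move=> p; rewrite /swap_half; case: (split_ordP p) => i ->.
  by rewrite split_rshift.
by rewrite split_lshift.
Qed.

Lemma symplB_swap u v : symplB u v = \sum_(p < N) u 0 p * v 0 (swap_half p).
Proof.
rewrite /symplB big_split /= big_split_ord /=.
by congr (_ + _); apply: eq_bigr => i _; rewrite /swap_half ?split_lshift ?split_rshift.
Qed.

Lemma symplBC u v : symplB u v = symplB v u.
Proof. by apply: eq_bigr => i _; rewrite addrC mulrC [u 0 _ * _]mulrC. Qed.

Lemma symplBDl u1 u2 v : symplB (u1 + u2) v = symplB u1 v + symplB u2 v.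
Proof. by rewrite /symplB -big_split; apply: eq_bigr => i _; rewrite !mxE /=; ring. Qed.

Lemma symplBZl (c : 'F_2) u v : symplB (c *: u) v = c * symplB u v.
Proof. by rewrite /symplB mulr_sumr; apply: eq_bigr => i _; rewrite !mxE; ring. Qed.

Lemma symplBDr u v1 v2 : symplB u (v1 + v2) = symplB u v1 + symplB u v2.
Proof. by rewrite symplBC symplBDl !(symplBC u). Qed.

Lemma symplBZr (c : 'F_2) u v : symplB u (c *: v) = c * symplB u v.
Proof. by rewrite symplBC symplBZl symplBC. Qed.

Lemma symplBxx u : symplB u u = 0.
Proof. by rewrite /symplB big1 // => i _; rewrite mulrC F2_addxx. Qed.

Lemma symplB0r u : symplB u 0 = 0.
Proof. by rewrite -(scale0r 0) symplBZr mul0r. Qed.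

Definition sympl_mx r (M : 'M['F_2]_(r, N)) : 'M['F_2]_(N, r) :=
  \matrix_(p, i) M i (swap_half p).

Definition sperpmx r (M : 'M['F_2]_(r, N)) : 'M['F_2]_N := kermx (sympl_mx M).

Lemma sympl_mxE r (M : 'M['F_2]_(r, N)) u i : (u *m sympl_mx M) 0 i = symplB u (row i M).
Proof. by rewrite symplB_swap !mxE; apply: eq_bigr => p _; rewrite !mxE. Qed.

Lemma sub_sperpmx_rows r (M : 'M['F_2]_(r, N)) u :
  (forall i, symplB u (row i M) = 0) -> (u <= sperpmx M)%MS.
Proof. by move=> uM; apply/sub_kermxP/rowP => i; rewrite sympl_mxE mxE uM. Qed.

Lemma sperpmxP r (M : 'M['F_2]_(r, N)) u :
  reflect (forall v, (v <= M)%MS -> symplB u v = 0) (u <= sperpmx M)%MS.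
Proof.
apply: (iffP idP) => [/sub_kermxP uM v /submxP[D ->] | uM].
  rewrite mulmx_sum_row (big_morph _ (symplBDr u) (symplB0r u)) big1 // => j _.
  by rewrite symplBZr -sympl_mxE uM mxE mulr0.
by apply: sub_sperpmx_rows => i; rewrite uM ?row_sub.
Qed.

Lemma mxrank_sperpmx r (M : 'M['F_2]_(r, N)) : \rank (sperpmx M) = (N - \rank M)%N.
Proof.
rewrite mxrank_ker; congr (_ - _)%N.
have -> : sympl_mx M = (col_perm (perm (inv_inj swap_halfK)) M)^T.
  by apply/matrixP => p i; rewrite !mxE permE.
by rewrite mxrank_tr col_permE mxrankMfree // row_free_unit unitmx_perm.
Qed.

Lemma perpB_sub r (M : 'M['F_2]_(r, N)) :
  perpB [set w | (w <= M)%MS] = [set w | (w <= sperpmx M)%MS].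
Proof.
apply/setP => u; rewrite !inE; apply/forallP/sperpmxP => uM v.
  by move=> vM; apply/eqP; move/implyP: (uM v); rewrite inE; apply.
by apply/implyP; rewrite inE => /uM ->.
Qed.

Lemma symplE1 (z w : vecE N) : (symplE z w).1 = symplB (piv z) (piv w).
Proof.
rewrite /symplE (big_morph (fun e : E => e.1) (id1 := 0) (op1 := +%R)
  (id2 := zeroE) (op2 := addE) (fun _ _ => erefl) erefl).
by apply: eq_bigr => i _; rewrite /= !mulE_coord !mxE.
Qed.

Lemma symplE2 (z w : vecE N) : (symplE z w).2 = symplB (zetav z) (piv w).
Proof.
rewrite /symplE (big_morph (fun e : E => e.2) (id1 := 0) (op1 := +%R)
  (id2 := zeroE) (op2 := addE) (fun _ _ => erefl) erefl).
by apply: eq_bigr => i _; rewrite /= !mulE_coord !mxE.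
Qed.

Lemma perpE_free_of r (M : 'M['F_2]_(r, N)) : perpE (free_of M) = free_of (sperpmx M).
Proof.
have E0P (e : E) : (e == zeroE) = (e.1 == 0) && (e.2 == 0) by case: e.
apply/setP => z; rewrite !inE; apply/forallP/andP => [zM | [/sperpmxP pz /sperpmxP zz] w].
  have zMi i : symplB (piv z) (row i M) = 0 /\ symplB (zetav z) (row i M) = 0.
    move/implyP: (zM (kappa_vec (row i M))).
    rewrite kappa_vec_free_of ?row_sub // E0P symplE1 symplE2 piv_kappa.
    by move=> /(_ isT) /andP[/andP[/eqP -> /eqP ->] _].
  by split; apply: sub_sperpmx_rows => i; case: (zMi i).
apply/implyP; rewrite inE => /andP[pw zw].
by rewrite !E0P !symplE1 !symplE2 pz // zz // symplBC pz // symplBC pz.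
Qed.

Lemma SHull_free_of r (M : 'M['F_2]_(r, N)) :
  SHull (free_of M) = free_of (M :&: sperpmx M)%MS.
Proof.
by rewrite /SHull perpE_free_of; apply/setP => z; rewrite !inE !sub_capmx andbACA.
Qed.
End Symplectic.

Section ConsMx.
Variables (R : Type) (r N : nat).

Definition cons_mx (a : 'rV[R]_N) (B : 'M[R]_(r, N)) : 'M[R]_(r.+1, N) :=
  \matrix_i oapp (fun j => row j B) a (unlift ord0 i).

Lemma row0_cons_mx a B : row ord0 (cons_mx a B) = a.
Proof. by rewrite rowK unlift_none. Qed.

Lemma row_lift_cons_mx a B i : row (lift ord0 i) (cons_mx a B) = row i B.
Proof. by rewrite rowK liftK. Qed.

End ConsMx.

Section RowSpaces.
Variables (F : fieldType) (r N : nat).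
Implicit Types (a : 'rV[F]_N) (B : 'M[F]_(r, N)).

Lemma cons_mx_eqmx a B : (cons_mx a B :=: a + B)%MS.
Proof.
apply/eqmxP/andP; split.
  apply/row_subP => i; case: (unliftP ord0 i) => [j ->|->].
    by rewrite (row_lift_cons_mx a B) (submx_trans (row_sub j B)) ?addsmxSr.
  by rewrite row0_cons_mx addsmxSl.
rewrite addsmx_sub -{1}(row0_cons_mx a B) row_sub /=.
by apply/row_subP => j; rewrite -(row_lift_cons_mx a B) row_sub.
Qed.

Lemma mxrank_adds_pivot a B c :
  a 0 c != 0 -> (forall i, row i B 0 c = 0) -> \rank (a + B)%MS = (\rank B).+1.
Proof.
move=> ac Bc; have aB : ~~ (a <= B)%MS.
  apply: contra ac => /submxP[D ->]; rewrite mxE big1 // => i _.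
  by move: (Bc i); rewrite mxE => ->; rewrite mulr0.
apply/eqP; rewrite eqn_leq; apply/andP; split.
  apply: leq_trans (leq_of_leqif (mxrank_adds_leqif a B)) _.
  by have := rank_leq_row a; lia.
by apply: rank_ltmx; rewrite ltmxE addsmxSr addsmx_sub (negbTE aB).
Qed.

Lemma eqmx_rowsP m m' (A : 'M[F]_(m, N)) (A' : 'M[F]_(m', N)) :
  (forall w : 'rV_N, (w <= A)%MS = (w <= A')%MS) -> (A :=: A')%MS.
Proof.
move=> AA'; apply/eqmxP/andP; split; apply/row_subP => i; [rewrite -AA' | rewrite AA'].
all: exact: row_sub.
Qed.

End RowSpaces.

Section Extension.
Variable n : nat.
Local Notation N' := (n.+1 + n.+1)%N.
Local Notation c0 := (lshift n.+1 (@ord0 n)).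
Implicit Types (u : 'rV['F_2]_(n + n)) (h : 'F_2).

Definition extB h1 h2 u : 'rV['F_2]_N' :=
  \row_p match split p with
         | inl j => match unlift ord0 j with None => h1 | Some i => u 0 (lshift n i) end
         | inr j => match unlift ord0 j with None => h2 | Some i => u 0 (rshift n i) end
         end.

Lemma extB_c0 h1 h2 u : extB h1 h2 u 0 c0 = h1.
Proof. by rewrite mxE split_lshift unlift_none. Qed.

Lemma extB_c1 h1 h2 u : extB h1 h2 u 0 (rshift n.+1 ord0) = h2.
Proof. by rewrite mxE split_rshift unlift_none. Qed.

Lemma extB_lshift h1 h2 u i : extB h1 h2 u 0 (lshift n.+1 (lift ord0 i)) = u 0 (lshift n i).
Proof. by rewrite mxE split_lshift liftK. Qed.

Lemma extB_rshift h1 h2 u i : extB h1 h2 u 0 (rshift n.+1 (lift ord0 i)) = u 0 (rshift n i).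
Proof. by rewrite mxE split_rshift liftK. Qed.

Lemma extBD h1 h2 u h1' h2' u' :
  extB h1 h2 u + extB h1' h2' u' = extB (h1 + h1') (h2 + h2') (u + u').
Proof.
apply/rowP => p; rewrite !mxE.
by case: (split p) => j; case: (unlift ord0 j) => *; rewrite ?mxE.
Qed.

Lemma extBZ c h1 h2 u : c *: extB h1 h2 u = extB (c * h1) (c * h2) (c *: u).
Proof.
apply/rowP => p; rewrite !mxE.
by case: (split p) => j; case: (unlift ord0 j) => *; rewrite ?mxE.
Qed.

Lemma extB0 : extB 0 0 0 = 0.
Proof. by rewrite -(scale0r (extB 0 0 0)) extBZ !mul0r scale0r. Qed.

Lemma symplB_extB h1 h2 u h1' h2' u' :
  symplB (extB h1 h2 u) (extB h1' h2' u') = h1 * h2' + h2 * h1' + symplB u u'.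
Proof.
rewrite {1}/symplB big_ord_recl !extB_c0 !extB_c1; congr (_ + _).
by apply: eq_bigr => i _; rewrite !extB_lshift !extB_rshift.
Qed.

Lemma extE_kc h1 h2 u (a b : 'I_n -> 'F_2) :
  (forall i, u 0 (lshift n i) = a i) -> (forall i, u 0 (rshift n i) = b i) ->
  extE (kc h1) (fun i => kc (a i)) (kc h2) (fun i => kc (b i)) = kappa_vec (extB h1 h2 u).
Proof.
move=> ua ub; apply/ffunP => p; rewrite !ffunE mxE.
by case: (split p) => j; case: (unlift ord0 j) => *; rewrite ?ua ?ub kcE.
Qed.

Definition ext_mx : 'M['F_2]_(n + n, N') := \matrix_q extB 0 0 'e_q.

Lemma mul_ext_mx u : u *m ext_mx = extB 0 0 u.
Proof.
have extB00D : {morph extB 0 0 : u1 u2 / u1 + u2}.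
  by move=> u1 u2; rewrite extBD !addr0.
rewrite mulmx_sum_row {2}(row_sum_delta u) (big_morph _ extB00D extB0).
by apply: eq_bigr => q _; rewrite rowK extBZ mulr0.
Qed.

Lemma extB_scale_add c h1 h2 u g :
  c *: extB h1 h2 u + g *m ext_mx = extB (c * h1) (c * h2) (c *: u + g).
Proof. by rewrite mul_ext_mx extBZ extBD !addr0. Qed.

Definition ext_idx (q : 'I_(n + n)) : 'I_N' :=
  match split q with
  | inl i => lshift n.+1 (lift ord0 i)
  | inr i => rshift n.+1 (lift ord0 i)
  end.

Lemma extB_ext_idx h1 h2 u q : extB h1 h2 u 0 (ext_idx q) = u 0 q.
Proof.
rewrite /ext_idx; case: (split_ordP q) => i ->;
  by rewrite ?split_lshift ?split_rshift ?extB_lshift ?extB_rshift.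
Qed.

Definition cut_mx : 'M['F_2]_(N', n + n) := \matrix_(p, q) (p == ext_idx q)%:R.

Lemma extB_cut h1 h2 u : extB h1 h2 u *m cut_mx = u.
Proof.
apply/rowP => q; rewrite mxE (bigD1 (ext_idx q)) //= [cut_mx _ _]mxE eqxx mulr1.
rewrite extB_ext_idx big1 ?addr0 // => p /negbTE np.
by rewrite [cut_mx _ _]mxE np mulr0.
Qed.

Lemma mxrank_mul_ext_mx r (M : 'M['F_2]_(r, n + n)) : \rank (M *m ext_mx) = \rank M.
Proof.
have MEC : M *m ext_mx *m cut_mx = M.
  by apply/row_matrixP => i; rewrite !row_mul mul_ext_mx extB_cut.
by apply/eqP; rewrite eqn_leq mxrankM_maxl -{1}MEC mxrankM_maxl.
Qed.

Lemma mxrank_extB1_adds h2 u r (B : 'M['F_2]_(r, N')) :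
  (forall i, row i B 0 c0 = 0) -> \rank (extB 1 h2 u + B)%MS = (\rank B).+1.
Proof. by apply: mxrank_adds_pivot; rewrite extB_c0 oner_neq0. Qed.

Lemma mxrank_extB1_adds_ext h2 u r (M : 'M['F_2]_(r, n + n)) :
  \rank (extB 1 h2 u + M *m ext_mx)%MS = (\rank M).+1.
Proof.
rewrite mxrank_extB1_adds ?mxrank_mul_ext_mx // => i.
by rewrite row_mul mul_ext_mx extB_c0.
Qed.

End Extension.

Arguments ext_mx {n}.
Arguments cut_mx {n}.

Lemma Gext_kappa_rows n k (G : 'M['F_2]_(k, n + n)) x r :
  Gext G x r = kappa_vec (row r (cons_mx (extB 1 1 x) (G *m ext_mx))).
Proof.
rewrite /Gext; case: (unliftP ord0 r) => [i ->|->].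
  rewrite (row_lift_cons_mx (extB 1 1 x)) row_mul mul_ext_mx.
  by apply: (extE_kc 0 0) => j; rewrite mxE.
by rewrite (row0_cons_mx _ (G *m ext_mx)); apply: (extE_kc 1 1).
Qed.

Lemma Hext_kappa_rows n m (H : 'M['F_2]_(m, n + n)) x y r :
  Hext H x y r = kappa_vec (row r (cons_mx (extB 1 (1 + symplB x y) y)
                   (\matrix_j extB 0 (symplB x (row j H)) (row j H)))).
Proof.
rewrite /Hext; case: (unliftP ord0 r) => [j ->|->].
  rewrite (row_lift_cons_mx (extB 1 (1 + symplB x y) y)) rowK.
  by apply: (extE_kc 0) => i; rewrite mxE.
by rewrite (row0_cons_mx _ (\matrix_j _)); apply: (extE_kc 1).
Qed.

Section Construction.
Variables (n k : nat) (G : 'M['F_2]_(k, n + n)) (x : 'rV['F_2]_(n + n)).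
Hypothesis xG : (x <= sperpmx G)%MS.

(* The row space of pi(G'), see [Gext_kappa_rows]. *)
Local Notation W := (extB 1 1 x + G *m ext_mx)%MS.

Lemma sub_extP v :
  reflect (exists c g, (g <= G)%MS /\ v = extB c c (c *: x + g)) (v <= W)%MS.
Proof.
apply: (iffP sub_addsmxP) => [[[c D] ->] | [c [g [/submxP[D ->] ->]]]] /=.
  exists (c 0 0), (D *m G); split; first exact: submxMl.
  by rewrite {1}(mx11_scalar c) mul_scalar_mx mulmxA extB_scale_add mulr1.
by exists (c%:M, D); rewrite mul_scalar_mx mulmxA extB_scale_add mulr1.
Qed.

Lemma extB_sub_ext c g : (g <= G)%MS -> (extB c c (c *: x + g) <= W)%MS.
Proof. by move=> gG; apply/sub_extP; exists c, g. Qed.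

Lemma symplB_extB_ext h1 h2 u c g :
  symplB (extB h1 h2 u) (extB c c (c *: x + g)) = c * (h1 + h2 + symplB u x) + symplB u g.
Proof. by rewrite symplB_extB symplBDr symplBZr; ring. Qed.

Lemma extB_sub_sperp_ext h1 h2 u :
  (extB h1 h2 u <= sperpmx W)%MS = (u <= sperpmx G)%MS && (h1 + h2 == symplB x u).
Proof.
apply/sperpmxP/andP => [uW | [/sperpmxP uG /eqP h12] _ /sub_extP[c [g [gG ->]]]].
  have uG g : (g <= G)%MS -> symplB u g = 0.
    move=> gG; move: (uW _ (extB_sub_ext 0 gG)).
    by rewrite symplB_extB_ext mul0r add0r.
  split; first exact/sperpmxP.
  move: (uW _ (extB_sub_ext 1 (sub0mx 1 G))).
  rewrite symplB_extB_ext mul1r symplB0r addr0 => /eqP.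
  by rewrite addr_eq0 F2_oppr symplBC.
by rewrite symplB_extB_ext h12 symplBC F2_addxx mulr0 add0r uG.
Qed.

Local Notation V := (G :&: sperpmx G)%MS.

Lemma hull_extE : (W :&: sperpmx W :=: extB 1 1 x + V *m ext_mx)%MS.
Proof.
apply/eqmxP/andP; split.
  apply/row_subP => i; move: (row_sub i (W :&: sperpmx W)%MS).
  rewrite sub_capmx => /andP[/sub_extP[c [g [gG ->]]]].
  rewrite extB_sub_sperp_ext => /andP[cxg_perp _].
  have g_perp : (g <= sperpmx G)%MS.
    have -> : g = c *: x + (c *: x + g) by rewrite addrA -scalerDl F2_addxx scale0r add0r.
    by rewrite addmx_sub ?scalemx_sub.
  have -> : extB c c (c *: x + g) = c *: extB 1 1 x + g *m ext_mx.
    by rewrite extB_scale_add mulr1.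
  by rewrite addmx_sub_adds ?scalemx_sub ?submxMr // sub_capmx gG.
rewrite addsmx_sub !sub_capmx addsmxSl extB_sub_sperp_ext xG symplBxx /=.
rewrite (submx_trans _ (addsmxSr _ _)) ?submxMr ?capmxSl //=.
apply/row_subP => i; rewrite row_mul mul_ext_mx extB_sub_sperp_ext.
have /andP[gG g_perp] : (row i V <= G)%MS && (row i V <= sperpmx G)%MS.
  by rewrite -sub_capmx row_sub.
by rewrite g_perp add0r eq_sym; apply/eqP; move/sperpmxP: xG; apply.
Qed.

Lemma mxrank_hull_ext : \rank (W :&: sperpmx W)%MS = (\rank V).+1.
Proof. by rewrite hull_extE mxrank_extB1_adds_ext. Qed.

Variables (m : nat) (H : 'M['F_2]_(m, n + n)) (y : 'rV['F_2]_(n + n)).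
Hypotheses (HG : (H :=: sperpmx G)%MS) (yG : (y <= sperpmx G)%MS).

Local Notation Hz := (\matrix_j extB 0 (symplB x (row j H)) (row j H)).

Lemma sperp_extE : (sperpmx W :=: extB 1 (1 + symplB x y)%R y + Hz)%MS.
Proof.
have HzW : (extB 1 (1 + symplB x y)%R y + Hz <= sperpmx W)%MS.
  rewrite addsmx_sub extB_sub_sperp_ext yG addrA F2_addxx add0r eqxx /=.
  by apply/row_subP => j; rewrite rowK extB_sub_sperp_ext -HG row_sub add0r /=.
have HzE : Hz *m cut_mx = H by apply/row_matrixP => j; rewrite row_mul rowK extB_cut.
apply/eqmx_sym/eqmxP; rewrite -(mxrank_leqif_eq HzW) eqn_leq mxrankS //=.
rewrite mxrank_sperpmx mxrank_extB1_adds_ext mxrank_extB1_adds; last first.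
  by move=> j; rewrite rowK extB_c0.
have := mxrankM_maxl Hz cut_mx; rewrite HzE HG mxrank_sperpmx.
by have := rank_leq_col G; lia.
Qed.

End Construction.

Theorem mainTheorem3 (n k l m : nat) (C : {set vecE (n + n)})
  (G : 'M['F_2]_(k, n + n)) (H : 'M['F_2]_(m, n + n))
  (x y : 'rV['F_2]_(n + n)) :
  E_linear C -> free_code C -> has_rank C k -> has_rank (SHull C) l ->
  (forall w, w \in Res C <-> (w <= G)%MS) ->
  (forall i : 'I_k, symplB x (row i G) = 0) ->
  m = (n + n - k)%N ->
  (forall w, w \in perpB (Res C) <-> (w <= H)%MS) ->
  y \in perpB (Res C) ->
  let D := Espan (Gext G x) :|: Fspan (Gext G x) in
  (E_linear D /\ free_code D /\ has_rank D k.+1 /\ has_rank (SHull D) l.+1) /\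
  generates (Hext H x y) (perpE D).
Proof.
move=> linC freeC rkC rkHull ResC x_rows _ HC yC D.
have CG : C = free_of G := free_linear_codeE linC freeC ResC.
have rkG : \rank G = k by apply: has_rank_uniq (has_rank_free_of G) _; rewrite -CG.
have rkV : \rank (G :&: sperpmx G)%MS = l.
  by apply: has_rank_uniq (has_rank_free_of _) _; rewrite -SHull_free_of -CG.
have perpRes : perpB (Res C) = [set w | (w <= sperpmx G)%MS].
  by rewrite CG Res_free_of perpB_sub.
have HG : (H :=: sperpmx G)%MS.
  apply: eqmx_rowsP => w; apply/idP/idP => [/(HC w) | wG].
    by rewrite perpRes inE.
  by apply/(HC w); rewrite perpRes inE.
have yG : (y <= sperpmx G)%MS by move: yC; rewrite perpRes inE.
have xG : (x <= sperpmx G)%MS by apply: sub_sperpmx_rows.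
pose W := (extB 1 1 x + G *m ext_mx)%MS.
have DW : D = free_of W.
  by rewrite /D (span_kappa_rows (Gext_kappa_rows G x)) (free_of_eqmx (cons_mx_eqmx _ _)).
split; first split; rewrite ?DW.
- exact: E_linear_free_of.
- split; first exact: free_code_free_of.
  rewrite SHull_free_of; split.
    by have := has_rank_free_of W; rewrite mxrank_extB1_adds_ext rkG.
  by have := has_rank_free_of (W :&: sperpmx W)%MS; rewrite mxrank_hull_ext // rkV.
rewrite /generates perpE_free_of (span_kappa_rows (Hext_kappa_rows H x y)).
by rewrite (free_of_eqmx (sperp_extE xG HG yG)) (free_of_eqmx (cons_mx_eqmx _ _)).
Qed.
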